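(* Let $N\ge2$ and let $x(t)=(x_1(t),\dots,x_N(t))$, $x_i(t)\in\mathbb{R}$, be a (Carathéodory) solution of $$\dot x_i(t)=\frac{\lambda_i(x)}{N}\sum_{j=1}^N M_{ij}(t)\,\phi_{ij}(x_i,x_j)\,(x_j(t)-x_i(t)),\qquad i=1,\dots,N,$$ where all $M_{ij}:[0,+\infty)\to[0,1]$ are Lebesgue measurable and $\lambda_i:\mathbb{R}^N\to\mathbb{R}^+$, $\phi_{ij}:\mathbb{R}\times\mathbb{R}\to\mathbb{R}^+$ are Lipschitz continuous and strictly positive. Assume that $x_+^*:=\max\{x_i(t):i=1,\dots,N\}$ is constant in $t$, and let $I^+(t)$ be the set of indices $i$ with $x_i(t)=x_+^*$. Then if $i\notin I^+(t)$, it holds $i\notin I^+(t+h)$ for all $h>0$. Similarly, if $x_-^*:=\min\{x_i(t):i=1,\dots,N\}$ is constant in $t$ and $I^-(t)$ is the set of indices with $x_i(t)=x_-^*$, then $i\notin I^-(t)$ implies $i\notin I^-(t+h)$ for all $h>0$. *)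

From mathcomp Require Import all_boot all_order all_algebra.
From mathcomp Require Import all_classical all_reals all_analysis.
Set Implicit Arguments. Unset Strict Implicit. Unset Printing Implicit Defensive.
Import Order.TTheory GRing.Theory Num.Theory.
Local Open Scope classical_set_scope.
Local Open Scope ring_scope.

Definition distN (R : realType) (N : nat) (y z : 'I_N -> R) : R :=
  \big[Num.max/0]_(k < N) `|y k - z k|.

(* Lipschitz continuity of a map R^N -> R (any norm on R^N is equivalent) *)
Definition lipschitzN (R : realType) (N : nat) (f : ('I_N -> R) -> R) : Prop :=
  exists L : R, forall y z, `|f y - f z| <= L * distN y z.

Definition lipschitz2 (R : realType) (f : R -> R -> R) : Prop :=
  exists L : R, forall a b a' b', `|f a b - f a' b'| <= L * (`|a - a'| + `|b - b'|).

Definition rhs (R : realType) (N : nat) (lam : 'I_N -> ('I_N -> R) -> R)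
  (M : 'I_N -> 'I_N -> R -> R) (phi : 'I_N -> 'I_N -> R -> R -> R)
  (x : 'I_N -> R -> R) (i : 'I_N) (s : R) : R :=
  lam i (fun k => x k s) / N%:R *
  \sum_(j < N) M i j s * phi i j (x i s) (x j s) * (x j s - x i s).

Definition caratheodory_solution (R : realType) (N : nat)
  (lam : 'I_N -> ('I_N -> R) -> R) (M : 'I_N -> 'I_N -> R -> R)
  (phi : 'I_N -> 'I_N -> R -> R -> R) (x : 'I_N -> R -> R) : Prop :=
  forall (i : 'I_N) (t : R), 0 <= t ->
    (lebesgue_measure : measure _ R).-integrable `[0, t]
        (fun s => (rhs lam M phi x i s)%:E) /\
    x i t = x i 0 + Rintegral lebesgue_measure `[0, t] (rhs lam M phi x i).

Definition is_max_of (R : realType) (N : nat) (v : 'I_N -> R) (c : R) : Prop :=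
  (forall i, v i <= c) /\ (exists i, v i = c).
Definition is_min_of (R : realType) (N : nat) (v : 'I_N -> R) (c : R) : Prop :=
  (forall i, c <= v i) /\ (exists i, v i = c).

From mathcomp Require Import all_boot all_order all_algebra.
From mathcomp Require Import all_classical all_reals all_analysis.
From mathcomp Require Import lra ring.
Set Implicit Arguments. Unset Strict Implicit. Unset Printing Implicit Defensive.
Import Order.TTheory GRing.Theory Num.Theory.
Local Open Scope classical_set_scope.
Local Open Scope ring_scope.

(* Let c be the constant maximum and y := c - x_i >= 0 (for the minimum, y := x_i - c).
   Since x_j - x_i <= c - x_i for every j, the system gives y' >= - K y in integral form,
   where K bounds the coupling rate lam_i / N * sum_j phi_ij along the trajectory, which is
   bounded on compact time intervals.  Such a y cannot reach 0 once positive: if y(s) = 0 and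
   K (s - a) <= 1/2, the supremum S of y on [a, s] satisfies S <= K S (s - a) <= S / 2, so y
   vanishes on [a, s]; finitely many steps of length 1 / (2 (K + 1)) cover [t, t + h]. *)

Section interval_integrals.
Context {R : realType}.
Notation mu := (@lebesgue_measure R).

Lemma integrable_itv_cst (u s k : R) : mu.-integrable `]u, s] (EFin \o cst k).
Proof.
apply: measurable_bounded_integrable => //; last exact: bounded_cst.
have := lebesgue_measure_itv `]u, s]; rewrite /= => ->; case: ifPn => _; last exact: ltry.
by rewrite -EFinB ltry.
Qed.

Lemma Rintegral_itv_cst (u s k : R) : u <= s -> \int[mu]_(v in `]u, s]) k = k * (s - u).
Proof.
move=> us; rewrite Rintegral_cst //.
have := lebesgue_measure_itv `]u, s]; rewrite /= => ->; rewrite lte_fin.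
by case: ltgtP us => //= -> _; rewrite subrr.
Qed.

Lemma integral_form_itvB (z g : R -> R) (u s : R) :
  (forall v, 0 <= v -> mu.-integrable `[0, v] (EFin \o g) /\
                       z v = z 0 + \int[mu]_(r in `[0, v]) g r) ->
  0 <= u -> u <= s -> z s - z u = \int[mu]_(r in `]u, s]) g r.
Proof.
move=> hz u0 us; have s0 := le_trans u0 us.
have [ig zs] := hz s s0; have [_ zu] := hz u u0.
by rewrite zs zu opprD addrACA subrr add0r Rintegral_itvB.
Qed.

Lemma integral_form_normr_le (z g : R -> R) (v T : R) :
  (forall r, 0 <= r -> mu.-integrable `[0, r] (EFin \o g) /\
                       z r = z 0 + \int[mu]_(r' in `[0, r]) g r') ->
  0 <= v -> v <= T -> `|z v| <= `|z 0| + \int[mu]_(r in `[0, T]) `|g r|.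
Proof.
move=> hz v0 vT; have [igv zv] := hz v v0; have [igT _] := hz T (le_trans v0 vT).
rewrite zv (le_trans (ler_normD _ _)) // lerD2l.
rewrite (le_trans (le_normr_Rintegral _ igv)) // -subr_ge0.
rewrite (Rintegral_itvB (integrable_norm igT)) ?bnd_simp //.
by apply: Rintegral_ge0 => r _ /=.
Qed.

End interval_integrals.

Section gronwall.
Context {R : realType}.
Notation mu := (@lebesgue_measure R).

Lemma gronwall_zero_backward (y f : R -> R) (K B a s : R) :
  0 <= K -> a <= s -> K * (s - a) <= 1 / 2 ->
  mu.-integrable `]a, s] (EFin \o f) ->
  (forall u, a <= u -> u <= s -> y s - y u = \int[mu]_(v in `]u, s]) f v) ->
  (forall v, a <= v -> v <= s -> - f v <= K * y v) ->
  (forall v, a <= v -> v <= s -> 0 <= y v <= B) ->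
  y s = 0 -> y a = 0.
Proof.
move=> K0 a_s Kas intf hdiff hf hy ys0.
set E := [set y u | u in `[a, s]].
have ubE : has_ubound E.
  by exists B => _ [u /andP[au us] <-]; case/andP: (hy u au us).
have Ea : E (y a) by exists a; rewrite //= in_itv /= lexx a_s.
have le_supE u : a <= u -> u <= s -> y u <= sup E.
  by move=> au us; apply: ub_le_sup => //; exists u; rewrite //= in_itv /= au us.
have [ya0 _] := andP (hy a (lexx a) a_s).
have supE0 : 0 <= sup E := le_trans ya0 (le_supE a (lexx a) a_s).
have supE_half : sup E <= sup E / 2.
  apply: ge_sup (ex_intro _ (y a) Ea) _ => z [u]; rewrite /= in_itv /= => /andP[au us] <-.
  have intu : mu.-integrable `]u, s] (EFin \o f).
    by apply: integrableS intf => //; apply: subset_itv; rewrite bnd_simp.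
  have : - (K * sup E) * (s - u) <= \int[mu]_(v in `]u, s]) f v.
    rewrite -Rintegral_itv_cst //; apply: le_Rintegral => //.
      exact: integrable_itv_cst.
    move=> v; rewrite /= in_itv /= => /andP[uv vs].
    have av := le_trans au (ltW uv).
    rewrite lerNl (le_trans (hf v av vs)) //.
    by rewrite ler_wpM2l // le_supE.
  rewrite -hdiff // ys0 sub0r mulNr lerN2 => yu.
  have Ksu : K * (s - u) <= 1 / 2.
    by rewrite (le_trans _ Kas) // ler_wpM2l // lerD2l lerN2.
  rewrite (le_trans yu) // mulrAC (le_trans (ler_wpM2r supE0 Ksu)) //; lra.
by apply/eqP; rewrite eq_le ya0 andbT (le_trans (le_supE a (lexx a) a_s)) //; lra.
Qed.

Lemma gronwall_pos_forward (y f : R -> R) (K B t T : R) :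
  0 <= K -> t <= T ->
  mu.-integrable `]t, T] (EFin \o f) ->
  (forall u s, t <= u -> u <= s -> s <= T ->
     y s - y u = \int[mu]_(v in `]u, s]) f v) ->
  (forall v, t <= v -> v <= T -> - f v <= K * y v) ->
  (forall v, t <= v -> v <= T -> 0 <= y v <= B) ->
  0 < y t -> 0 < y T.
Proof.
move=> K0 tT intf hdiff hf hy yt.
set d := (2 * (K + 1))^-1.
have d0 : 0 < d by rewrite invr_gt0; lra.
have Kd : K * d <= 1 / 2.
  by rewrite /d mul1r ler_pdivrMr; lra.
have pos_upto n s : t <= s -> s <= T -> s <= t + n%:R * d -> 0 < y s.
  elim: n s => [|n IH] s ts sT.
    by rewrite mul0r addr0 => st; have -> : s = t by apply/eqP; rewrite eq_le st ts.
  move=> snd; have [|lt_a_s] := leP s (t + n%:R * d); first exact: IH.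
  set a := t + n%:R * d in lt_a_s.
  have ta : t <= a by rewrite lerDl mulr_ge0 // ltW.
  have ya : 0 < y a by apply: IH => //; apply: le_trans (ltW lt_a_s) sT.
  have [ys0 _] := andP (hy s ts sT).
  rewrite lt0r ys0 andbT; apply/eqP => ys.
  suff ya0 : y a = 0 by rewrite ya0 ltxx in ya.
  apply: (@gronwall_zero_backward y f K B a s) => //.
  - exact: ltW.
  - have sad : s - a <= d by move: snd; rewrite -natr1 mulrDl mul1r /a; lra.
    by rewrite (le_trans _ Kd) // ler_wpM2l.
  - by apply: integrableS intf => //; apply: subset_itv; rewrite bnd_simp.
  - by move=> u au us; apply: hdiff => //; apply: le_trans au.
  - by move=> v av vs; apply: hf => //; [apply: le_trans av | apply: le_trans sT].
  - by move=> v av vs; apply: hy => //; [apply: le_trans av | apply: le_trans sT].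
apply: (pos_upto (Num.truncn ((T - t) / d)).+1) => //.
by rewrite -lerBlDl -ler_pdivrMr // ltW // truncnS_gt.
Qed.

End gronwall.

Lemma lipschitzN_bounded (R : realType) (N : nat) (f : ('I_N -> R) -> R) (C : R) :
  lipschitzN f -> 0 <= C ->
  exists K, forall y, (forall k, `|y k| <= C) -> `|f y| <= K.
Proof.
move=> [L hL] C0; exists (`|f (fun=> 0)| + `|L| * C) => y hy.
have d0 : 0 <= distN y (fun=> 0) by apply: bigmax_ge_id.
have dC : distN y (fun=> 0) <= C by apply: bigmax_le => // k _; rewrite subr0.
rewrite -[f y](subrK (f (fun=> 0))) (le_trans (ler_normD _ _)) // addrC lerD2l.
rewrite (le_trans (hL _ _)) // (le_trans (ler_wpM2r d0 (ler_norm L))) //.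
exact: ler_wpM2l.
Qed.

Lemma lipschitz2_bounded (R : realType) (f : R -> R -> R) (C : R) :
  lipschitz2 f ->
  exists K, forall a b, `|a| <= C -> `|b| <= C -> `|f a b| <= K.
Proof.
move=> [L hL]; exists (`|f 0 0| + `|L| * (C + C)) => a b aC bC.
have ab0 : 0 <= `|a - 0| + `|b - 0| by rewrite addr_ge0.
rewrite -[f a b](subrK (f 0 0)) (le_trans (ler_normD _ _)) // addrC lerD2l.
rewrite (le_trans (hL _ _ _ _)) // (le_trans (ler_wpM2r ab0 (ler_norm L))) //.
by rewrite ler_wpM2l // !subr0 lerD.
Qed.

Section extremal_values.
Variables (R : realType) (N : nat).
Variables (lam : 'I_N -> ('I_N -> R) -> R) (M : 'I_N -> 'I_N -> R -> R).
Variables (phi : 'I_N -> 'I_N -> R -> R -> R) (x : 'I_N -> R -> R).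
Hypothesis hMrange : forall i j t, 0 <= t -> 0 <= M i j t <= 1.
Hypothesis hlam_lip : forall i, lipschitzN (lam i).
Hypothesis hlam_pos : forall i y, 0 < lam i y.
Hypothesis hphi_lip : forall i j, lipschitz2 (phi i j).
Hypothesis hphi_pos : forall i j a b, 0 < phi i j a b.
Hypothesis hsol : caratheodory_solution lam M phi x.
Notation mu := (@lebesgue_measure R).

Definition coupling_rate (i : 'I_N) (s : R) : R :=
  lam i (fun k => x k s) / N%:R * \sum_(j < N) phi i j (x i s) (x j s).

Lemma coupling_rate_ge0 i s : 0 <= coupling_rate i s.
Proof.
apply: mulr_ge0; first by rewrite divr_ge0 // ltW.
by apply: sumr_ge0 => j _; apply: ltW.
Qed.

Lemma solution_bounded T : 0 <= T ->
  exists2 C, 0 <= C & forall k v, 0 <= v -> v <= T -> `|x k v| <= C.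
Proof.
move=> T0; exists (\sum_k (`|x k 0| + \int[mu]_(s in `[0, T]) `|rhs lam M phi x k s|)).
  by apply: sumr_ge0 => k _; rewrite addr_ge0 // Rintegral_ge0.
move=> k v v0 vT; rewrite (le_trans (integral_form_normr_le (hsol k) v0 vT)) //.
rewrite (bigD1 k) //= lerDl; apply: sumr_ge0 => j _.
by rewrite addr_ge0 // Rintegral_ge0.
Qed.

Lemma coupling_rate_bounded i T : 0 <= T ->
  exists K, forall v, 0 <= v -> v <= T -> coupling_rate i v <= K.
Proof.
move=> T0; have [C C0 hC] := solution_bounded T0.
have [Kl hKl] := lipschitzN_bounded (hlam_lip i) C0.
have /choice[Kp hKp] j :
    exists K, forall a b, `|a| <= C -> `|b| <= C -> `|phi i j a b| <= K.
  exact: lipschitz2_bounded.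
exists (Kl / N%:R * \sum_j Kp j) => v v0 vT.
apply: ler_pM.
- by rewrite divr_ge0 // ltW.
- by apply: sumr_ge0 => j _; apply: ltW.
- by rewrite ler_wpM2r // (le_trans (ler_norm _)) // hKl // => k; apply: hC.
- by apply: ler_sum => j _; rewrite (le_trans (ler_norm _)) // hKp // hC.
Qed.

Lemma weighted_rhs_le (w c : R) i v : 0 <= v -> (forall k, w * x k v <= w * c) ->
  w * rhs lam M phi x i v <= coupling_rate i v * (w * (c - x i v)).
Proof.
move=> v0 hc; have Y0 : 0 <= w * (c - x i v) by rewrite mulrBr subr_ge0.
rewrite /rhs /coupling_rate mulrCA -mulrA.
apply: ler_wpM2l; first by rewrite divr_ge0 // ltW.
rewrite mulr_sumr mulr_suml; apply: ler_sum => j _.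
have /andP[M0 M1] := hMrange i j v0; have phi0 := ltW (hphi_pos i j (x i v) (x j v)).
rewrite mulrCA (le_trans (ler_wpM2l (mulr_ge0 M0 phi0) (_ : _ <= w * (c - x i v)))) //.
  by rewrite !mulrBr lerD2r.
by rewrite ler_wpM2r // ler_piMl.
Qed.

Lemma extremal_value_not_reached (w c : R) : w != 0 ->
  (forall t, 0 <= t -> forall k, w * x k t <= w * c) ->
  forall i t, 0 <= t -> x i t != c -> forall h, 0 < h -> x i (t + h) != c.
Proof.
move=> w0 hc i t t0 xt h h0; set T := t + h.
have tT : t <= T by rewrite lerDl ltW.
have T0 := le_trans t0 tT.
have [C C0 hC] := solution_bounded T0.
have [K hK] := coupling_rate_bounded i T0.
have K0 : 0 <= K := le_trans (coupling_rate_ge0 i 0) (hK 0 (lexx 0) T0).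
pose y s := w * (c - x i s).
have int_rhs u s : t <= u -> s <= T -> mu.-integrable `]u, s] (EFin \o rhs lam M phi x i).
  move=> tu sT; have [iT _] := hsol i T0.
  by apply: integrableS iT => //; apply: subset_itv; rewrite bnd_simp // (le_trans t0).
have y_ge0 v : 0 <= v -> 0 <= y v by move=> v0; rewrite /y mulrBr subr_ge0 hc.
have y_gt0 s : 0 <= s -> x i s != c -> 0 < y s.
  by move=> s0 xs; rewrite lt0r y_ge0 // andbT mulf_neq0 // subr_eq0 eq_sym.
have yT : 0 < y T.
  apply: (@gronwall_pos_forward R y (fun s => - w * rhs lam M phi x i s) K
            (`|w| * (`|c| + C)) t T) => //; last exact: y_gt0.
  - rewrite (_ : EFin \o _ = fun s => (- w)%:E * (EFin \o rhs lam M phi x i) s)%E.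
      exact/integrableZl/int_rhs.
    by apply/funext => s; rewrite /= EFinM.
  - move=> u s tu us sT; rewrite RintegralZl ?int_rhs //.
    rewrite -(integral_form_itvB (hsol i) (le_trans t0 tu) us) /y; ring.
  - move=> v tv vT; have v0 := le_trans t0 tv.
    rewrite mulNr opprK (le_trans (weighted_rhs_le i v0 (hc v v0))) //.
    by rewrite ler_wpM2r ?y_ge0 ?hK.
  - move=> v tv vT; have v0 := le_trans t0 tv.
    rewrite y_ge0 //= (le_trans (ler_norm _)) // normrM ler_wpM2l //.
    by rewrite (le_trans (ler_normB _ _)) // lerD2l hC.
by apply: contraTneq yT => xT; rewrite /y xT subrr mulr0 ltxx.
Qed.

End extremal_values.

Theorem lemma1 (R : realType) (N : nat) (hN : (2 <= N)%N)
  (lam : 'I_N -> ('I_N -> R) -> R) (M : 'I_N -> 'I_N -> R -> R)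
  (phi : 'I_N -> 'I_N -> R -> R -> R) (x : 'I_N -> R -> R)
  (hMmeas : forall i j, measurable_fun [set t : R | 0 <= t] (M i j))
  (hMrange : forall i j t, 0 <= t -> 0 <= M i j t <= 1)
  (hlam_lip : forall i, lipschitzN (lam i))
  (hlam_pos : forall i y, 0 < lam i y)
  (hphi_lip : forall i j, lipschitz2 (phi i j))
  (hphi_pos : forall i j a b, 0 < phi i j a b)
  (hsol : caratheodory_solution lam M phi x) :
  (forall cplus : R,
     (forall t, 0 <= t -> is_max_of (fun k => x k t) cplus) ->
     forall (i : 'I_N) (t : R), 0 <= t -> x i t != cplus ->
       forall h : R, 0 < h -> x i (t + h) != cplus) /\
  (forall cminus : R,
     (forall t, 0 <= t -> is_min_of (fun k => x k t) cminus) ->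
     forall (i : 'I_N) (t : R), 0 <= t -> x i t != cminus ->
       forall h : R, 0 < h -> x i (t + h) != cminus).
Proof.
have not_reached w := extremal_value_not_reached (w := w)
  hMrange hlam_lip hlam_pos hphi_lip hphi_pos hsol.
split=> [c hmax | c hmin].
- apply: (not_reached 1) => [|t t0 k]; first exact: oner_neq0.
  by rewrite !mul1r; case: (hmax t t0).
- apply: (not_reached (-1)) => [|t t0 k]; first by rewrite oppr_eq0 oner_neq0.
  by rewrite !mulN1r lerN2; case: (hmin t t0).
Qed.
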